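(* Let $I\in\operatorname{PI}(B)$ have all-positive sign, i.e. $I(\chi)\in\operatorname{Irr}(B)$ for all $\chi\in\operatorname{Irr}(B)$. Then there exist $\lambda\in\operatorname{Irr}(B)$ and $\sigma\in\operatorname{Aut}(G)$ such that $I$ is a composition of $I_\lambda$ and $I_\sigma$ (specifically, $I_\sigma\circ I_\lambda\circ I=\mathrm{id}$ for suitable such $\lambda,\sigma$).
   Context: Let $p$ be a prime, $\zeta$ a primitive $p$-th root of unity, $K=\mathbb{Q}_p(\zeta)$, $\mathcal{O}=\mathbb{Z}_p[\zeta]$. Let $G=\langle g\rangle$ be cyclic of order $p$, $B=\mathcal{O}G$, $\operatorname{Irr}(B)=\{\chi_0,\dots,\chi_{p-1}\}$ with $\chi_a(g^b)=\zeta^{ab}$. $R_K(B)$ is the free abelian group on $\operatorname{Irr}(B)$ with the standard inner product. For a linear map $I$ of $R_K(B)$ put $\mu_I(x,y)=\sum_{\chi}I(\chi)(x)\chi(y)$. A generalized character $\mu$ of $G\times G$ is perfect if (i) $\mu(x,y)/|C_G(x)|,\ \mu(x,y)/|C_G(y)|\in\mathcal{O}$ for all $x,y$; (ii) whenever $\mu(x,y)\ne0$, $x$ is $p$-regular iff $y$ is. $\operatorname{PI}(B)$ is the group of bijective linear isometries $I$ of $R_K(B)$ with $\mu_I$ perfect. For $\lambda\in\operatorname{Irr}(B)$, $I_\lambda(\chi)=\lambda\chi$; for $\sigma\in\operatorname{Aut}(G)$, $I_\sigma(\chi)=\chi^\sigma$ where $\chi^\sigma(h)=\chi(h^{\sigma^{-1}})$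 (both extended linearly). *)

From HB Require Import structures.
From mathcomp Require Import all_boot all_order all_algebra all_fingroup all_solvable all_field.
Set Implicit Arguments. Unset Strict Implicit. Unset Printing Implicit Defensive.
Import Order.TTheory GRing.Theory Num.Theory.
Local Open Scope ring_scope.

(* G = <g> cyclic of order p is modelled as the additive group 'Z_p,
   g^b being represented by b.  Irr(B) = {chi_a | a : 'Z_p}.
   z is the primitive p-th root of unity zeta, taken in algC. *)

Definition chi (p : nat) (z : algC) (a h : 'Z_p) : algC := z ^+ (a * h)%N.

(* Elements of R_K(B): integer combinations of Irr(B), as coefficient vectors. *)
Definition RK (p : nat) := {ffun 'Z_p -> int}.

Definition basis (p : nat) (b : 'Z_p) : RK p := [ffun c => ((c == b) : nat)%:Z].

Definition ch (p : nat) (z : algC) (v : RK p) (h : 'Z_p) : algC :=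
  \sum_(c : 'Z_p) (v c)%:~R * chi z c h.

(* A linear map I of R_K(B) is given by the images of the basis; linext is its
   linear extension. *)
Definition linext (p : nat) (I : 'Z_p -> RK p) (v : RK p) : RK p :=
  [ffun c => \sum_(a : 'Z_p) v a * I a c].

Definition dotRK (p : nat) (v w : RK p) : int := \sum_(c : 'Z_p) v c * w c.

Definition mu (p : nat) (z : algC) (I : 'Z_p -> RK p) (x y : 'Z_p) : algC :=
  \sum_(a : 'Z_p) ch z (I a) x * chi z a y.

(* membership in O = Z_p[zeta] for elements of Q(zeta) inside algC:
   integrality away from p. *)
Definition in_O (p : nat) (x : algC) : Prop :=
  exists d : nat, coprime d p /\ (d%:R * x \in Aint).

Definition perfect (p : nat) (z : algC) (I : 'Z_p -> RK p) : Prop :=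
  forall x y : 'Z_p,
    [/\ in_O p (mu z I x y / (#|('C[x])%g|)%:R),
        in_O p (mu z I x y / (#|('C[y])%g|)%:R) &
        (mu z I x y != 0 -> ((p^'.-elt x)%g = (p^'.-elt y)%g))].

Definition PI (p : nat) (z : algC) (I : 'Z_p -> RK p) : Prop :=
  [/\ bijective (linext I),
      (forall v w, dotRK (linext I v) (linext I w) = dotRK v w) &
      perfect z I].

From HB Require Import structures.
From mathcomp Require Import all_boot all_order all_algebra all_fingroup all_solvable all_field.
From mathcomp Require Import ring.
Import Order.TTheory GRing.Theory Num.Theory.
Set Implicit Arguments. Unset Strict Implicit. Unset Printing Implicit Defensive.
Local Open Scope ring_scope.

(* Write I(chi_a) = chi_(f a).  Then mu_I(1, y) = p * gamma(y), where gamma is the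
   discrete Fourier transform of a |-> zeta^(f a), so perfectness makes every
   gamma(y) an algebraic integer, while Parseval gives sum_y |gamma(y)|^2 = 1.
   The Galois conjugates of gamma(y) are the Fourier coefficients taken with the
   other primitive roots zeta^k, hence also have absolute value at most 1; since
   their product is a rational integer, a nonzero gamma(y) has |gamma(y)| = 1.
   So gamma is supported at a single y0, and Fourier inversion gives
   f(a) = f(0) - a y0, with y0 <> 0 because I is injective. *)

Section ZpArith.

Variable p : nat.
Hypothesis p_gt1 : (1 < p)%N.

Lemma card_Zp_ord : #|'Z_p| = p.
Proof. by rewrite card_ord Zp_cast. Qed.

Lemma ltn_Zp (x : 'Z_p) : (x < p)%N.
Proof. by case: x => x; rewrite /= Zp_cast. Qed.

Lemma val_ZpD (x y : 'Z_p) : val (x + y) = ((x + y) %% p)%N.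
Proof. exact: (congr1 (modn _) (Zp_cast p_gt1)). Qed.

Lemma val_ZpM (x y : 'Z_p) : val (x * y) = ((x * y) %% p)%N.
Proof. exact: (congr1 (modn _) (Zp_cast p_gt1)). Qed.

Lemma card_cent1_Zp (x : 'Z_p) : #|'C[x]%g| = p.
Proof.
have -> : 'C[x]%g = [set: 'Z_p].
  by apply/setP => u; rewrite in_setT; apply/cent1P; exact: addrC.
by rewrite cardsT card_Zp_ord.
Qed.

Lemma sum_exprZp (R : idomainType) (u : R) : u ^+ p = 1 ->
  \sum_(m : 'Z_p) u ^+ m = if u == 1 then p%:R else 0.
Proof.
move=> up; have [->|u_neq1] := eqVneq u 1.
  by under eq_bigr do rewrite expr1n; rewrite sumr_const card_Zp_ord.
set S := \sum_(m : 'Z_p) _.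
have uS : u * S = S.
  rewrite /S mulr_sumr [in RHS](reindex_inj (addIr (1 : 'Z_p))).
  apply: eq_bigr => m _; rewrite val_ZpD expr_mod // -exprS.
  by congr (u ^+ _); rewrite addn1.
have : (u - 1) * S == 0 by rewrite mulrBl mul1r uS subrr.
by rewrite mulf_eq0 subr_eq0 (negbTE u_neq1) => /eqP.
Qed.

End ZpArith.

Section Fourier.

Variables (p : nat) (w : algC).
Hypotheses (p_gt1 : (1 < p)%N) (w_prim : p.-primitive_root w).

Let wp : w ^+ p = 1 := prim_expr_order w_prim.

Let p_neq0 : (p%:R : algC) != 0.
Proof. by rewrite pnatr_eq0 -lt0n ltnW. Qed.

Definition expZp (x : 'Z_p) : algC := w ^+ x.

Lemma expZp0 : expZp 0 = 1.
Proof. exact: expr0. Qed.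

Lemma expZpD x y : expZp (x + y) = expZp x * expZp y.
Proof. by rewrite /expZp val_ZpD // expr_mod // exprD. Qed.

Lemma expZpM x y : expZp (x * y) = w ^+ (x * y)%N.
Proof. by rewrite /expZp val_ZpM // expr_mod. Qed.

Lemma chi_expZp a h : chi w a h = expZp (a * h).
Proof. by rewrite expZpM. Qed.

Lemma expZp_inj : injective expZp.
Proof.
move=> x y /eqP; rewrite /expZp (eq_prim_root_expr w_prim).
by rewrite !modn_small ?ltn_Zp // => /eqP/val_inj.
Qed.

Lemma conj_expZp x : (expZp x)^* = expZp (- x).
Proof.
have xp : expZp x ^+ p = 1 by rewrite /expZp -exprM mulnC exprM wp expr1n.
have x_norm1 : `|expZp x| = 1.
  by apply/eqP; rewrite -(pexpr_eq1 (ltnW p_gt1)) // -normrX xp normr1.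
have x_neq0 : expZp x != 0 by rewrite -normr_eq0 x_norm1 oner_eq0.
apply: (mulfI x_neq0); rewrite -normCK x_norm1 expr1n.
by rewrite -expZpD subrr expZp0.
Qed.

Lemma sum_expZpM c : \sum_(y : 'Z_p) expZp (c * y) = if c == 0 then p%:R else 0.
Proof.
have -> : \sum_(y : 'Z_p) expZp (c * y) = \sum_(y : 'Z_p) expZp c ^+ y.
  by apply: eq_bigr => y _; rewrite expZpM exprM.
rewrite sum_exprZp //; last by rewrite /expZp -exprM mulnC exprM wp expr1n.
by rewrite -expZp0 (inj_eq expZp_inj).
Qed.

Definition fourier (f : 'Z_p -> 'Z_p) (y : 'Z_p) : algC :=
  p%:R^-1 * \sum_(a : 'Z_p) expZp (f a + a * y).

Variable f : 'Z_p -> 'Z_p.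

Lemma parseval : \sum_(y : 'Z_p) `|fourier f y| ^+ 2 = 1.
Proof.
have norm2E y : `|fourier f y| ^+ 2 = p%:R^-1 * p%:R^-1 *
    \sum_(a : 'Z_p) \sum_(b : 'Z_p) expZp (f a - f b) * expZp ((a - b) * y).
  rewrite normCK /fourier rmorphM fmorphV /= conjC_nat rmorph_sum /= mulrACA.
  rewrite mulr_suml; congr (_ * _); apply: eq_bigr => a _.
  rewrite mulr_sumr; apply: eq_bigr => b _.
  by rewrite conj_expZp -!expZpD; congr expZp; ring.
under eq_bigr do rewrite norm2E.
rewrite -mulr_sumr exchange_big /=.
have diag a : \sum_(y : 'Z_p) \sum_(b : 'Z_p)
    expZp (f a - f b) * expZp ((a - b) * y) = p%:R.
  rewrite exchange_big /= (bigD1 a) //= [X in _ + X]big1 ?addr0 => [|b ba].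
    under eq_bigr do rewrite !subrr mul0r expZp0 mulr1.
    by rewrite sumr_const card_Zp_ord.
  by rewrite -mulr_sumr sum_expZpM subr_eq0 eq_sym (negbTE ba) mulr0.
under eq_bigr do rewrite diag.
by rewrite sumr_const card_Zp_ord // -(mulr_natr (p%:R)) mulrACA mulVf ?mulr1.
Qed.

Lemma fourier_inversion b :
  \sum_(y : 'Z_p) fourier f y * expZp (- (b * y)) = expZp (f b).
Proof.
rewrite /fourier; under eq_bigr do rewrite -mulrA mulr_suml.
rewrite -mulr_sumr exchange_big /=.
have termE a : \sum_(y : 'Z_p) expZp (f a + a * y) * expZp (- (b * y))
    = expZp (f a) * \sum_(y : 'Z_p) expZp ((a - b) * y).
  rewrite mulr_sumr; apply: eq_bigr => y _.
  by rewrite -!expZpD; congr expZp; ring.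
under eq_bigr do rewrite termE.
rewrite (bigD1 b) //= [X in _ + X]big1 ?addr0 => [|a ab].
  by rewrite sum_expZpM subrr eqxx mulrC mulfK.
by rewrite sum_expZpM subr_eq0 (negbTE ab) mulr0.
Qed.

Lemma norm_fourier_le1 y : `|fourier f y| ^+ 2 <= 1.
Proof.
rewrite -parseval (bigD1 y) //= lerDl.
by apply: sumr_ge0 => x _; rewrite exprn_ge0.
Qed.

Lemma fourier_supp1_affine y0 : (forall y, y != y0 -> fourier f y = 0) ->
  forall b, f b = f 0 - b * y0.
Proof.
move=> supp b; apply: expZp_inj.
have invE c : expZp (f c) = fourier f y0 * expZp (- (c * y0)).
  rewrite -fourier_inversion (bigD1 y0) //= [X in _ + X]big1 ?addr0 // => y yy0.
  by rewrite supp // mul0r.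
by rewrite invE expZpD (invE 0) mul0r oppr0 expZp0 mulr1.
Qed.

End Fourier.

Lemma aut_fourier p (w : algC) (f : 'Z_p -> 'Z_p) y k :
  w ^+ p = 1 -> coprime k p ->
  exists nu : {rmorphism algC -> algC}, nu (fourier w f y) = fourier (w ^+ k) f y.
Proof.
move=> wp kp; have [nu nuE] := Qn_aut_exists kp.
exists nu; rewrite /fourier rmorphM fmorphV rmorph_nat rmorph_sum; congr (_ * _).
by apply: eq_bigr => a _; rewrite /expZp rmorphXn nuE // exprAC.
Qed.

Definition fourier_poly p (f : 'Z_p -> 'Z_p) y : {poly algC} :=
  p%:R^-1 *: \sum_(a : 'Z_p) 'X^((f a + a * y)%R).

Lemma horner_fourier_poly p (f : 'Z_p -> 'Z_p) y x :
  (fourier_poly f y).[x] = fourier x f y.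
Proof.
rewrite hornerZ horner_sum /fourier; congr (_ * _).
by apply: eq_bigr => a _; rewrite hornerXn.
Qed.

Lemma fourier_poly_Crat p (f : 'Z_p -> 'Z_p) y :
  fourier_poly f y \is a polyOver Crat.
Proof.
by rewrite polyOverZ ?rpredV ?rpred_nat // rpred_sum // => a _; apply: polyOverXn.
Qed.

Lemma sum_horner_unity_Crat p (w : algC) (P : {poly algC}) :
  (1 < p)%N -> w ^+ p = 1 -> P \is a polyOver Crat ->
  \sum_(m : 'Z_p) P.[w ^+ m] \in Crat.
Proof.
move=> p_gt1 wp /polyOverP P_Crat.
under eq_bigr do rewrite horner_coef.
rewrite exchange_big /=; apply: rpred_sum => i _; rewrite -mulr_sumr rpredM //.
under eq_bigr do rewrite exprAC.
rewrite sum_exprZp //; last by rewrite exprAC wp expr1n.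
by case: ifP; rewrite ?rpred_nat.
Qed.

Section PrimeGalois.

Variables (p : nat) (w : algC).
Hypotheses (p_pr : prime p) (w_prim : p.-primitive_root w).

Let p_gt1 := prime_gt1 p_pr.
Let wp : w ^+ p = 1 := prim_expr_order w_prim.

Lemma Zp_coprime (k : 'Z_p) : k != 0 -> coprime k p.
Proof.
move=> k_neq0; rewrite coprime_sym prime_coprime // gtnNdvd ?ltn_Zp // lt0n.
by apply: contra k_neq0 => /eqP k0; apply/eqP/val_inj.
Qed.

Lemma Zp_unit (k : 'Z_p) : k != 0 -> k \is a GRing.unit.
Proof.
by move=> k_neq0; rewrite -(natr_Zp k) unitZpE // coprime_sym Zp_coprime.
Qed.

(* The product is Q(w) for Q(X) = prod_k P(X^k) in Crat[X], and Q(w^m) = Q(w) for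
   every m <> 0; so (p - 1) Q(w) = sum_m Q(w^m) - Q(1), and power sums of p-th
   roots of unity are rational. *)
Lemma prod_horner_prim_root_Crat (P : {poly algC}) : P \is a polyOver Crat ->
  \prod_(k : 'Z_p | k != 0) P.[w ^+ k] \in Crat.
Proof.
move=> P_Crat; set N := \prod_(k | _) _.
pose Q := \prod_(k : 'Z_p | k != 0) (P \Po 'X^k).
have Q_Crat : Q \is a polyOver Crat.
  by apply: rpred_prod => k _; rewrite polyOver_comp ?polyOverXn.
have QE x : Q.[x] = \prod_(k : 'Z_p | k != 0) P.[x ^+ k].
  by rewrite horner_prod; under eq_bigr do rewrite horner_comp hornerXn.
have Q_conj (m : 'Z_p) : m != 0 -> Q.[w ^+ m] = N.
  move=> m_neq0; have m_unit := Zp_unit m_neq0.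
  rewrite QE /N [in RHS](reindex_inj (mulrI m_unit)) /=.
  apply: eq_big => [k|k _].
    by rewrite -{2}(mulr0 m) (inj_eq (mulrI m_unit)).
  by rewrite -exprM -(expZpM p_gt1 w_prim).
have := sum_horner_unity_Crat p_gt1 wp Q_Crat.
rewrite (bigD1 0) //= expr0 (eq_bigr _ Q_conj) sumr_const cardC1 card_Zp_ord //.
have Q1_Crat : Q.[1] \in Crat by rewrite rpred_horner ?rpred1.
have pred_p_neq0 : (p.-1%:R : algC) != 0.
  by rewrite pnatr_eq0 -lt0n -ltnS prednK ?prime_gt0.
move=> /rpredB/(_ Q1_Crat); rewrite addrC addrK -mulr_natr => NpC.
by rewrite -(mulfK pred_p_neq0 N) rpred_div ?rpred_nat.
Qed.

Lemma fourier_norm_ge1 (f : 'Z_p -> 'Z_p) y :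
  fourier w f y \in Aint -> fourier w f y != 0 -> 1 <= `|fourier w f y| ^+ 2.
Proof.
move=> fA f_neq0; set N := \prod_(k : 'Z_p | k != 0) fourier (w ^+ k) f y.
have conj_fourier (k : 'Z_p) : k != 0 ->
    exists nu : {rmorphism algC -> algC},
      nu (fourier w f y) = fourier (w ^+ k) f y.
  by move=> k_neq0; apply: aut_fourier; rewrite ?Zp_coprime.
have N_int : N \in Num.int.
  apply: Cint_rat_Aint.
    rewrite /N; under eq_bigr do rewrite -horner_fourier_poly.
    exact/prod_horner_prim_root_Crat/fourier_poly_Crat.
  by apply: rpred_prod => k /conj_fourier[nu <-]; rewrite Aint_aut.
have N_neq0 : N != 0.
  by apply/prodf_neq0 => k /conj_fourier[nu <-]; rewrite fmorph_eq0.
have : 1 <= `|N| ^+ 2 by rewrite exprn_ege1 ?norm_intr_ge1.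
move=> /le_trans; apply.
rewrite /N normr_prod -prodrXl (bigD1 1) ?oner_eq0 //= expr1.
rewrite ler_piMr ?exprn_ge0 // prodr_ile1 // => k /andP[k_neq0 _].
rewrite exprn_ge0 //= norm_fourier_le1 //.
by rewrite prim_root_exp_coprime // Zp_coprime.
Qed.

End PrimeGalois.

Lemma sum_norm2_eq1_supp1 (R : numDomainType) (T : finType) (F : T -> R) :
  \sum_t `|F t| ^+ 2 = 1 -> (forall t, F t != 0 -> 1 <= `|F t| ^+ 2) ->
  exists t0, forall t, t != t0 -> F t = 0.
Proof.
move=> sum1 ge1; have [t0 Ft0_neq0 | F0] := pickP (fun t => F t != 0); last first.
  move: sum1; rewrite big1 => [/esym/eqP|t _]; first by rewrite oner_eq0.
  by rewrite (eqP (negbFE (F0 t))) normr0 expr0n.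
exists t0 => t tt0; apply/eqP; apply: contraTT isT => Ft_neq0.
have : 1 + 1 <= (1 : R).
  rewrite -[leRHS]sum1 (bigD1 t0) //= (bigD1 t) //= addrA.
  apply: le_trans (lerD (ge1 _ Ft0_neq0) (ge1 _ Ft_neq0)) _.
  by rewrite lerDl sumr_ge0 // => s _; rewrite exprn_ge0.
by rewrite gerDl ler10.
Qed.

Lemma in_O_Aint p x : in_O p x -> p%:R * x \in Aint -> x \in Aint.
Proof.
move=> [d [dp dxA]] pxA.
have /coprimezP[[u v] /= uv] : coprimez d p by rewrite coprimezE.
have -> : x = u%:~R * (d%:R * x) + v%:~R * (p%:R * x).
  rewrite !mulrA -mulrDl -[d%:R]/((d%:Z)%:~R) -[p%:R]/((p%:Z)%:~R).
  by rewrite -!intrM -intrD uv mul1r.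
by rewrite rpredD // rpredM // Aint_int.
Qed.

Lemma ch_basis p (z : algC) (b h : 'Z_p) : ch z (basis b) h = chi z b h.
Proof.
rewrite /ch (bigD1 b) //= [X in _ + X]big1 ?addr0 => [|c cb].
  by rewrite ffunE eqxx mul1r.
by rewrite ffunE (negbTE cb) mul0r.
Qed.

Lemma linext_basis p (I : 'Z_p -> RK p) a : linext I (basis a) = I a.
Proof.
apply/ffunP => c; rewrite ffunE (bigD1 a) //= [X in _ + X]big1 ?addr0 => [|b ba].
  by rewrite ffunE eqxx mul1r.
by rewrite ffunE (negbTE ba) mul0r.
Qed.

Lemma basis_inj p : injective (@basis p).
Proof.
move=> a b /(congr1 (fun v : RK p => v a)); rewrite !ffunE eqxx.
by case: eqP.
Qed.

Lemma Aut_Zp_mulr p (u : 'Z_p) (u_unit : u \is a GRing.unit) :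
  perm (mulrI u_unit) \in Aut [set: 'Z_p].
Proof.
rewrite inE; apply/andP; split; first by apply/subsetP => x; rewrite inE.
by apply/morphicP => x y _ _; rewrite !permE /= mulrDr.
Qed.

Section PositivePerfectIsometry.

Variables (p : nat) (z : algC) (I : 'Z_p -> RK p) (f : 'Z_p -> 'Z_p).
Hypotheses (p_pr : prime p) (z_prim : p.-primitive_root z).
Hypothesis If : forall a, I a = basis (f a).

Let p_gt1 := prime_gt1 p_pr.

Lemma mu1_fourier y : mu z I 1 y = p%:R * fourier z f y.
Proof.
rewrite /fourier mulrA mulfV ?pnatr_eq0 -?lt0n ?prime_gt0 // mul1r.
apply: eq_bigr => a _.
by rewrite If ch_basis !chi_expZp // mulr1 -expZpD.
Qed.

Lemma perfect_fourier_Aint y : perfect z I -> fourier z f y \in Aint.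
Proof.
move=> Iperf; have z_Aint := Aint_prim_root z_prim.
apply: (@in_O_Aint p); last first.
  rewrite -mu1_fourier rpred_sum // => a _.
  by rewrite If ch_basis rpredM // rpredX.
have [+ _ _] := Iperf 1 y.
by rewrite card_cent1_Zp // mu1_fourier mulrC mulKf ?pnatr_eq0 -?lt0n ?prime_gt0.
Qed.

Lemma perfect_affine : perfect z I -> exists y0, forall b, f b = f 0 - b * y0.
Proof.
move=> Iperf.
have [y0 supp] := sum_norm2_eq1_supp1 (parseval p_gt1 z_prim f)
  (fun y => fourier_norm_ge1 p_pr z_prim (perfect_fourier_Aint y Iperf)).
exists y0 => b; apply: (fourier_supp1_affine p_gt1 z_prim); exact: supp.
Qed.

End PositivePerfectIsometry.

Theorem mainTheorem11 (p : nat) (hp : prime p) (z : algC)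
  (hz : p.-primitive_root z) (I : 'Z_p -> RK p)
  (hPI : PI z I) (hpos : forall a : 'Z_p, exists b : 'Z_p, I a = basis b) :
  exists (l : 'Z_p) (s : {perm 'Z_p}),
    s \in Aut [set: 'Z_p] /\
    (* (I_s o I_l o I)(chi_a) = chi_a, compared as class functions:
       (I_s psi)(h) = psi(s^-1 h), (I_l psi)(h) = chi_l(h) psi(h) *)
    forall a h : 'Z_p,
      chi z l ((s^-1)%g h) * ch z (I a) ((s^-1)%g h) = chi z a h.
Proof.
have p_gt1 := prime_gt1 hp.
have [f If] := fin_all_exists hpos.
case: hPI => [[J IK _] _ Iperf].
have [y0 f_aff] := perfect_affine hp hz If Iperf.
have y0N_unit : - y0 \is a GRing.unit.
  rewrite Zp_unit // oppr_eq0; apply: contra_neq (@oner_neq0 'Z_p) => y0_0.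
  apply/basis_inj/(can_inj IK).
  by rewrite !linext_basis !If (f_aff 1) y0_0 mulr0 subr0.
have u_unit : (- y0)^-1 \is a GRing.unit by rewrite unitrV.
exists (- f 0), (perm (mulrI u_unit))^-1%g; split.
  by rewrite groupV Aut_Zp_mulr.
move=> a h; rewrite invgK permE If ch_basis !chi_expZp // -expZpD //; congr expZp.
rewrite (f_aff a); transitivity (a * h * (- y0 * (- y0)^-1)); first by ring.
by rewrite mulrV // mulr1.
Qed.
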